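(* Let $\delta\ge0$ and let $T\in C^1(\mathbb{T}^1)$ be a diffeomorphism with $T'>0$ and rotation number $\rho\in D_\delta$, having an invariant probability measure with continuous positive density $h$. Suppose that for some $\nu\in\left[\frac{\delta}{1+\delta},1\right]$ there is $C$ with $|(T^{q_n})'(\xi)-1|\le C\Delta_n^\nu$ for all $n\ge0$, $\xi\in\mathbb{T}^1$. Then $h\in C^{\nu(1+\delta)-\delta}(\mathbb{T}^1)$.
   Context: An irrational $\rho$ is in $D_\delta$ if there is $C>0$ with $|\rho-p/q|\ge Cq^{-2-\delta}$ for all rationals $p/q$. Write $\rho\in(0,1)$ as a continued fraction $\rho=[k_1,k_2,\dots]$ with convergents $p_n/q_n$, where $p_0=0,q_0=1,p_{-1}=1,q_{-1}=0$, $p_n=k_np_{n-1}+p_{n-2}$, $q_n=k_nq_{n-1}+q_{n-2}$; set $\Delta_n=|q_n\rho-p_n|$. $C^\alpha$ for $\alpha\in(0,1]$ means $\alpha$-Hölder continuous; $C^0$ means continuous. *)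

From Stdlib Require Import Reals Lra Lia ZArith.
From Coquelicot Require Import Coquelicot.
Open Scope R_scope.

Fixpoint iterate (n : nat) (f : R -> R) (x : R) : R :=
  match n with
  | O => x
  | S m => f (iterate m f x)
  end.

(* Circle diffeomorphisms are represented through a lift F : R -> R with
   F (x + 1) = F x + 1.  C^1 with F' > 0. *)
Definition C1_lift_pos (F : R -> R) : Prop :=
  (forall x, F (x + 1) = F x + 1) /\
  (forall x, ex_derive F x) /\
  (forall x, continuous (Derive F) x) /\
  (forall x, 0 < Derive F x).

Definition rotation_number_is (F : R -> R) (rho : R) : Prop :=
  forall x, is_lim_seq (fun n => (iterate n F x - x) / INR n) rho.

Definition irrational (rho : R) : Prop :=
  forall (p : Z) (q : Z), (q <> 0)%Z -> rho <> IZR p / IZR q.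

Definition D_class (delta rho : R) : Prop :=
  irrational rho /\
  exists C, 0 < C /\
    forall (p : Z) (q : Z), (0 < q)%Z ->
      Rabs (rho - IZR p / IZR q) >= C * Rpower (IZR q) (- 2 - delta).

(* Continued fraction of rho in (0,1): remainders x_0 = rho,
   x_{n+1} = {1 / x_n};  partial quotients k_{n+1} = floor (1 / x_n),
   so that rho = [k_1, k_2, ...]. *)
Fixpoint cf_rem (rho : R) (n : nat) : R :=
  match n with
  | O => rho
  | S m => / cf_rem rho m - IZR (Int_part (/ cf_rem rho m))
  end.

Definition cf_k (rho : R) (n : nat) : nat :=
  match n with
  | O => O
  | S m => Z.to_nat (Int_part (/ cf_rem rho m))
  end.

(* cf_pq rho n = ((p_{n-1}, q_{n-1}), (p_n, q_n)), starting from
   p_{-1} = 1, q_{-1} = 0, p_0 = 0, q_0 = 1. *)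
Fixpoint cf_pq (rho : R) (n : nat) : (nat * nat) * (nat * nat) :=
  match n with
  | O => ((1%nat, 0%nat), (0%nat, 1%nat))
  | S m =>
      let '((pp, qp), (p, q)) := cf_pq rho m in
      ((p, q), (cf_k rho (S m) * p + pp, cf_k rho (S m) * q + qp)%nat)
  end.

Definition cf_p (rho : R) (n : nat) : nat := fst (snd (cf_pq rho n)).
Definition cf_q (rho : R) (n : nat) : nat := snd (snd (cf_pq rho n)).

Definition cf_Delta (rho : R) (n : nat) : R :=
  Rabs (INR (cf_q rho n) * rho - INR (cf_p rho n)).

(* h is the density (w.r.t. Lebesgue measure on R/Z, seen as a 1-periodic
   function on R) of a T-invariant probability measure, continuous, positive. *)
Definition invariant_density (F : R -> R) (h : R -> R) : Prop :=
  (forall x, h (x + 1) = h x) /\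
  (forall x, continuous h x) /\
  (forall x, 0 < h x) /\
  RInt h 0 1 = 1 /\
  (* invariance mu(T^{-1} I) = mu(I) on all arcs I = [F a, F b] *)
  (forall a b, RInt h (F a) (F b) = RInt h a b).

(* C^alpha: alpha-Hoelder for alpha in (0,1], continuous for alpha = 0 *)
Definition Holder (alpha : R) (h : R -> R) : Prop :=
  if Req_EM_T alpha 0 then forall x, continuous h x
  else exists K, forall x y, Rabs (h x - h y) <= K * Rpower (Rabs (x - y)) alpha.

(* In the coordinate [s = cdf h x], the distribution function of the invariant measure,
   [F] becomes the rotation by [rho], and the density becomes [G = h o cdf^-1].  Differentiating
   [cdf h o F^q = cdf h + q rho] gives [h = (F^q)' . (h o F^q)], so the hypothesis on [F^(q_n)]
   says [|G (s +- Delta_n) - G s| <= A Delta_n^nu].  An increment [t] with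
   [Delta_(N+1) <= t < Delta_N] is crossed by [t / Delta_(N+1)] such steps, at a cost
   [A t Delta_(N+1)^(nu-1)], which the Diophantine bound [Delta_(N+1) >= c Delta_N^(1+delta)]
   turns into [O(t^alpha)] with [alpha = nu (1 + delta) - delta].  The remainder is treated in
   the same way at the finer scales; since [Delta] halves every two steps their costs form a
   geometric series, and continuity of [G] absorbs what is left.  Finally [cdf h] is
   bi-Lipschitz, so [h = G o cdf h] is [alpha]-Hölder as well. *)

From Stdlib Require Import Reals Lra Lia ZArith.
From Coquelicot Require Import Coquelicot.
Open Scope R_scope.

Lemma Rpower_base_1 e : Rpower 1 e = 1.
Proof. unfold Rpower; rewrite ln_1, Rmult_0_r; apply exp_0. Qed.

Lemma Rpower_pos x e : 0 < Rpower x e.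
Proof. apply exp_pos. Qed.

Definition cf_p_prev (rho : R) (n : nat) : nat := fst (fst (cf_pq rho n)).
Definition cf_q_prev (rho : R) (n : nat) : nat := snd (fst (cf_pq rho n)).

Lemma cf_pq_succ rho n :
  cf_p rho (S n) = (cf_k rho (S n) * cf_p rho n + cf_p_prev rho n)%nat /\
  cf_q rho (S n) = (cf_k rho (S n) * cf_q rho n + cf_q_prev rho n)%nat /\
  cf_p_prev rho (S n) = cf_p rho n /\ cf_q_prev rho (S n) = cf_q rho n.
Proof.
  unfold cf_p, cf_q, cf_p_prev, cf_q_prev; simpl.
  destruct (cf_pq rho n) as [[a b] [c d]]; simpl; tauto.
Qed.

(* [cf_rem_prod rho n] is [x_0 x_1 ... x_(n-1)], so that [Delta_n = cf_rem_prod rho (S n)]. *)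
Fixpoint cf_rem_prod (rho : R) (n : nat) : R :=
  match n with O => 1 | S m => cf_rem_prod rho m * cf_rem rho m end.

Lemma cf_k_succ_spec rho n : 0 < cf_rem rho n < 1 ->
  INR (cf_k rho (S n)) = IZR (Int_part (/ cf_rem rho n)) /\ 1 <= INR (cf_k rho (S n)).
Proof.
  intros Hx; simpl.
  assert (Hinv : 1 < / cf_rem rho n).
  { rewrite <- Rinv_1; apply Rinv_lt_contravar; lra. }
  destruct (base_Int_part (/ cf_rem rho n)) as [_ Hfl].
  assert (Hk : (1 <= Int_part (/ cf_rem rho n))%Z).
  { assert (Hk0 : 0 < IZR (Int_part (/ cf_rem rho n))) by lra.
    apply lt_IZR in Hk0; lia. }
  rewrite INR_IZR_INZ, Z2Nat.id by lia.
  split; [reflexivity | apply IZR_le in Hk; exact Hk].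
Qed.

Lemma cf_rem_mul_succ rho n : 0 < cf_rem rho n < 1 ->
  cf_rem rho n * cf_rem rho (S n) = 1 - INR (cf_k rho (S n)) * cf_rem rho n.
Proof.
  intros Hx; destruct (cf_k_succ_spec rho n Hx) as [Hk _].
  rewrite Hk; simpl; field; lra.
Qed.

Lemma cf_invariants rho : 0 < rho < 1 -> irrational rho -> forall n,
  0 < cf_rem rho n < 1 /\
  INR (cf_q rho n) * rho - INR (cf_p rho n) = (-1) ^ n * cf_rem_prod rho (S n) /\
  INR (cf_q_prev rho n) * rho - INR (cf_p_prev rho n) = - (-1) ^ n * cf_rem_prod rho n /\
  (1 <= cf_q rho n)%nat /\ 0 < cf_rem_prod rho (S n).
Proof.
  intros Hr Hirr; induction n as [|n IH].
  - unfold cf_q, cf_p, cf_q_prev, cf_p_prev; simpl; repeat split; try lra; lia.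
  - destruct IH as [Hx [He [Hem [Hq HP]]]].
    destruct (cf_pq_succ rho n) as [Ep [Eq [Epm Eqm]]].
    pose proof (cf_rem_mul_succ rho n Hx) as Hxx.
    destruct (cf_k_succ_spec rho n Hx) as [_ Hk1].
    set (k := cf_k rho (S n)) in *.
    assert (HxS : 0 <= cf_rem rho (S n) < 1).
    { simpl; destruct (base_Int_part (/ cf_rem rho n)); lra. }
    assert (He' : INR (cf_q rho (S n)) * rho - INR (cf_p rho (S n))
                  = (-1) ^ S n * cf_rem_prod rho (S (S n))).
    { rewrite Ep, Eq, !plus_INR, !mult_INR.
      transitivity (INR k * (INR (cf_q rho n) * rho - INR (cf_p rho n)) +
                    (INR (cf_q_prev rho n) * rho - INR (cf_p_prev rho n))); [ring|].
      rewrite He, Hem.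
      change (cf_rem_prod rho (S (S n)))
        with (cf_rem_prod rho n * cf_rem rho n * cf_rem rho (S n)).
      change (cf_rem_prod rho (S n)) with (cf_rem_prod rho n * cf_rem rho n).
      transitivity ((-1) ^ S n * cf_rem_prod rho n * (1 - INR k * cf_rem rho n));
        [simpl pow; ring | rewrite <- Hxx; ring]. }
    assert (HqS : (1 <= cf_q rho (S n))%nat).
    { rewrite Eq; assert (1 <= k)%nat by (apply INR_le; simpl; lra); nia. }
    (* [x_(n+1) = 0] would make [rho] rational *)
    assert (HxS' : 0 < cf_rem rho (S n)).
    { destruct HxS as [[H0|H0] _]; auto; exfalso.
      apply (Hirr (Z.of_nat (cf_p rho (S n))) (Z.of_nat (cf_q rho (S n)))); [lia|].
      rewrite <- !INR_IZR_INZ.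
      assert (E : INR (cf_q rho (S n)) * rho - INR (cf_p rho (S n)) = 0).
      { rewrite He'; change (cf_rem_prod rho (S (S n)))
          with (cf_rem_prod rho (S n) * cf_rem rho (S n)); rewrite <- H0; ring. }
      assert (0 < INR (cf_q rho (S n))) by (apply lt_0_INR; lia).
      field_simplify_eq; lra. }
    repeat split; try lra; auto.
    + rewrite Epm, Eqm, He; simpl pow; ring.
    + change (0 < cf_rem_prod rho (S n) * cf_rem rho (S n)); nra.
Qed.

Section ContinuedFraction.
Variable rho : R.
Hypothesis Hr : 0 < rho < 1.
Hypothesis Hirr : irrational rho.

Lemma cf_rem_bounds n : 0 < cf_rem rho n < 1.
Proof. apply (cf_invariants rho Hr Hirr n). Qed.

Lemma cf_rem_prod_pos n : 0 < cf_rem_prod rho n.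
Proof. destruct n; [simpl; lra | apply (cf_invariants rho Hr Hirr n)]. Qed.

Lemma cf_signed_Delta n :
  INR (cf_q rho n) * rho - INR (cf_p rho n) = (-1) ^ n * cf_rem_prod rho (S n).
Proof. apply (cf_invariants rho Hr Hirr n). Qed.

Lemma cf_Delta_prod n : cf_Delta rho n = cf_rem_prod rho (S n).
Proof.
  unfold cf_Delta; rewrite cf_signed_Delta, Rabs_mult, pow_1_abs, Rabs_right.
  - ring.
  - left; apply cf_rem_prod_pos.
Qed.

Lemma cf_rem_prod_succ_le n : cf_rem_prod rho (S n) <= cf_rem_prod rho n.
Proof.
  change (cf_rem_prod rho n * cf_rem rho n <= cf_rem_prod rho n).
  pose proof (cf_rem_bounds n); pose proof (cf_rem_prod_pos n); nra.
Qed.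

(* [x_n x_(n+1) = 1 - k_(n+1) x_n <= 1 - x_n] and [x_(n+1) < 1] give [x_n x_(n+1) <= 1/2]. *)
Lemma cf_rem_prod_succ2_le_half n : cf_rem_prod rho (S (S n)) <= cf_rem_prod rho n / 2.
Proof.
  change (cf_rem_prod rho n * cf_rem rho n * cf_rem rho (S n) <= cf_rem_prod rho n / 2).
  pose proof (cf_rem_bounds n) as Hx; pose proof (cf_rem_bounds (S n)).
  pose proof (cf_rem_mul_succ rho n Hx) as Hxx.
  destruct (cf_k_succ_spec rho n Hx) as [_ Hk1].
  pose proof (cf_rem_prod_pos n).
  assert (cf_rem rho n * cf_rem rho (S n) <= / 2) by nra.
  rewrite Rmult_assoc; nra.
Qed.

Lemma cf_q_prod_det n :
  INR (cf_q rho n) * cf_rem_prod rho n + INR (cf_q_prev rho n) * cf_rem_prod rho (S n) = 1.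
Proof.
  induction n as [|n IH]; [unfold cf_q, cf_q_prev; simpl; lra|].
  destruct (cf_pq_succ rho n) as [_ [Eq [_ Eqm]]].
  pose proof (cf_rem_mul_succ rho n (cf_rem_bounds n)) as Hxx.
  change (cf_rem_prod rho (S (S n)))
    with (cf_rem_prod rho n * cf_rem rho n * cf_rem rho (S n)).
  change (cf_rem_prod rho (S n)) with (cf_rem_prod rho n * cf_rem rho n) in *.
  rewrite Eq, Eqm, plus_INR, mult_INR, <- IH.
  transitivity (INR (cf_q rho n) * cf_rem_prod rho n *
                  (INR (cf_k rho (S n)) * cf_rem rho n + cf_rem rho n * cf_rem rho (S n))
                + INR (cf_q_prev rho n) * (cf_rem_prod rho n * cf_rem rho n)); [ring|].
  rewrite Hxx; ring.
Qed.

(* With [q_n x_0 ... x_(n-1) <= 1] from the determinant identity, the Diophantine bound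
   [Delta_n >= C q_n^(-1-delta)] becomes a bound on consecutive products. *)
Lemma cf_rem_prod_dioph delta : 0 <= delta -> D_class delta rho ->
  exists c, 0 < c /\ forall n, c * Rpower (cf_rem_prod rho n) (1 + delta) <= cf_rem_prod rho (S n).
Proof.
  intros Hd [_ [C [HC HD]]]; exists C; split; [exact HC|]; intros n.
  destruct (cf_invariants rho Hr Hirr n) as [_ [_ [_ [Hq _]]]].
  set (q := INR (cf_q rho n)); set (p := INR (cf_p rho n)).
  assert (Hq0 : 0 < q) by (apply lt_0_INR; lia).
  specialize (HD (Z.of_nat (cf_p rho n)) (Z.of_nat (cf_q rho n)) ltac:(lia)).
  rewrite <- !INR_IZR_INZ in HD; fold q p in HD.
  assert (E : cf_rem_prod rho (S n) = q * Rabs (rho - p / q)).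
  { rewrite <- cf_Delta_prod; unfold cf_Delta; fold q p.
    replace (q * rho - p) with (q * (rho - p / q)) by (field; lra).
    rewrite Rabs_mult, Rabs_right; lra. }
  pose proof (cf_q_prod_det n) as Hdet; fold q in Hdet.
  pose proof (cf_rem_prod_pos n); pose proof (cf_rem_prod_pos (S n)).
  assert (Hqp : q * cf_rem_prod rho n <= 1) by (pose proof (pos_INR (cf_q_prev rho n)); nra).
  assert (Hqp' : Rpower (q * cf_rem_prod rho n) (1 + delta) <= 1).
  { rewrite <- (Rpower_base_1 (1 + delta)) at 2; apply Rle_Rpower_l; nra. }
  rewrite <- Rpower_mult_distr in Hqp' by lra.
  assert (Hinv : q * Rpower q (-2 - delta) * Rpower q (1 + delta) = 1).
  { rewrite <- (Rpower_1 q) at 1 by lra; rewrite <- !Rpower_plus.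
    replace (1 + (-2 - delta) + (1 + delta)) with 0 by ring; apply Rpower_O; lra. }
  pose proof (Rpower_pos q (1 + delta)); pose proof (Rpower_pos (cf_rem_prod rho n) (1 + delta)).
  pose proof (Rpower_pos q (-2 - delta)).
  assert (Hle : Rpower (cf_rem_prod rho n) (1 + delta) <= q * Rpower q (-2 - delta)).
  { apply (Rmult_le_reg_l (Rpower q (1 + delta))); [lra|].
    replace (Rpower q (1 + delta) * (q * Rpower q (-2 - delta))) with 1
      by (rewrite <- Hinv at 1; ring).
    exact Hqp'. }
  rewrite E; nra.
Qed.
End ContinuedFraction.

(* [x * y^(nu - 1)] is the cost of crossing a distance [x] with steps of size [y]. *)
Lemma scale_loss_le (x y c delta nu : R) : 0 < x -> 0 < y -> 0 < c -> nu <= 1 ->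
  c * Rpower x (1 + delta) <= y ->
  x * Rpower y (nu - 1) <= Rpower c (nu - 1) * Rpower x (nu * (1 + delta) - delta).
Proof.
  intros Hx Hy Hc Hnu H.
  assert (H1 : Rpower (c * Rpower x (1 + delta)) (1 - nu) <= Rpower y (1 - nu)).
  { apply Rle_Rpower_l; [lra|]; split; auto; pose proof (Rpower_pos x (1 + delta)); nra. }
  rewrite <- Rpower_mult_distr, Rpower_mult in H1 by (auto; apply Rpower_pos).
  replace (nu - 1) with (- (1 - nu)) by ring.
  replace (nu * (1 + delta) - delta) with (1 + - ((1 + delta) * (1 - nu))) by ring.
  rewrite !Rpower_Ropp, Rpower_plus, Rpower_1, Rpower_Ropp by auto.
  pose proof (Rpower_pos c (1 - nu)); pose proof (Rpower_pos x ((1 + delta) * (1 - nu))).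
  pose proof (Rpower_pos y (1 - nu)).
  rewrite <- Rmult_assoc, (Rmult_comm (/ _) x), Rmult_assoc.
  apply Rmult_le_compat_l; [lra|].
  rewrite <- Rinv_mult; apply Rinv_le_contravar; [nra | lra].
Qed.

Lemma exists_nat_floor_mul (u d : R) : 0 <= u -> 0 < d ->
  exists b : nat, INR b * d <= u < INR b * d + d.
Proof.
  intros Hu Hd; destruct (base_Int_part (u / d)) as [H1 H2].
  assert (Hud : 0 <= u / d) by (apply Rdiv_le_0_compat; lra).
  assert (Hz : (-1 < Int_part (u / d))%Z) by (apply lt_IZR; lra).
  exists (Z.to_nat (Int_part (u / d))); rewrite INR_IZR_INZ, Z2Nat.id by lia.
  assert (E : u / d * d = u) by (field; lra).
  pose proof (Rmult_le_compat_r d _ _ (Rlt_le _ _ Hd) H1) as Hle.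
  pose proof (Rmult_lt_compat_r d (u / d) (IZR (Int_part (u / d)) + 1) Hd ltac:(lra)) as Hlt.
  rewrite E in Hle, Hlt; lra.
Qed.

Lemma increment_mul_nat (G : R -> R) d B : (forall w, Rabs (G (w + d) - G w) <= B) ->
  forall (b : nat) w, Rabs (G (w + INR b * d) - G w) <= INR b * B.
Proof.
  intros H b; induction b as [|b IH]; intros w.
  - simpl; rewrite Rmult_0_l, Rplus_0_r, Rminus_diag, Rabs_R0; lra.
  - rewrite S_INR.
    replace (w + (INR b + 1) * d) with (w + INR b * d + d) by ring.
    replace (G (w + INR b * d + d) - G w) with
      ((G (w + INR b * d + d) - G (w + INR b * d)) + (G (w + INR b * d) - G w)) by ring.
    eapply Rle_trans; [apply Rabs_triang|].
    specialize (H (w + INR b * d)); specialize (IH w); lra.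
Qed.

Lemma increment_of_increment_opp (G : R -> R) d B :
  (forall w, Rabs (G (w - d) - G w) <= B) -> forall w, Rabs (G (w + d) - G w) <= B.
Proof.
  intros H w; specialize (H (w + d)).
  replace (w + d - d) with w in H by ring.
  rewrite Rabs_minus_sym; exact H.
Qed.

Section HolderFromScales.
Variables (G : R -> R) (D : nat -> R) (M A c delta nu : R).
Hypothesis HDpos : forall n, 0 < D n.
Hypothesis HD0 : D 0%nat = 1.
Hypothesis HDdec : forall n, D (S n) <= D n.
Hypothesis HDhalf : forall n, D (S (S n)) <= D n / 2.
Hypothesis Hc : 0 < c.
Hypothesis HDdio : forall n, c * Rpower (D n) (1 + delta) <= D (S n).
Hypothesis Hdelta : 0 <= delta.
Hypothesis Hnu : nu <= 1.
Hypothesis Halpha : 0 < nu * (1 + delta) - delta.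
Hypothesis HGb : forall s, Rabs (G s) <= M.
Hypothesis HGs : forall s n, Rabs (G (s + D (S n)) - G s) <= A * Rpower (D (S n)) nu.
Hypothesis HGc : forall s eps, 0 < eps -> exists eta, 0 < eta /\
   forall u, Rabs u < eta -> Rabs (G (s + u) - G s) < eps.

Let alpha := nu * (1 + delta) - delta.
Let Ac := A * Rpower c (nu - 1).
Let r := Rpower (/ 2) alpha.
(* [B] solves [2 Ac + B r = B]: two single-scale steps plus the recursive cost two scales
   deeper, where [D] has at least halved. *)
Let B := 2 * Ac / (1 - r).

Lemma increment_bound_nonneg : 0 <= M.
Proof. pose proof (HGb 0); pose proof (Rabs_pos (G 0)); lra. Qed.

Lemma increment_coeff_nonneg : 0 <= A.
Proof.
  pose proof (HGs 0 0); pose proof (Rabs_pos (G (0 + D 1%nat) - G 0)).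
  pose proof (Rpower_pos (D 1%nat) nu); nra.
Qed.

Lemma scale_antitone n m : (n <= m)%nat -> D m <= D n.
Proof. induction 1; [lra | pose proof (HDdec m); lra]. Qed.

Lemma scale_even_le_pow k : D (2 * k)%nat <= (/ 2) ^ k.
Proof.
  induction k as [|k IH]; [simpl; rewrite HD0; lra|].
  replace (2 * S k)%nat with (S (S (2 * k))) by lia.
  pose proof (HDhalf (2 * k)); change ((/ 2) ^ S k) with (/ 2 * (/ 2) ^ k); lra.
Qed.

Lemma scale_small eta : 0 < eta -> exists J, D J < eta.
Proof.
  intros He.
  destruct (pow_lt_1_zero (/ 2) ltac:(rewrite Rabs_right; lra) eta He) as [N HN].
  exists (2 * N)%nat; pose proof (HN N (le_n N)); pose proof (scale_even_le_pow N).
  rewrite Rabs_right in * by (apply Rle_ge, pow_le; lra); lra.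
Qed.

Lemma scale_bracket t : 0 < t < 1 -> exists N, D (S N) <= t < D N.
Proof.
  intros Ht; destruct (scale_small t (proj1 Ht)) as [J HJ].
  assert (HJ' : D J <= t) by lra; clear HJ.
  induction J as [|J IH]; [rewrite HD0 in HJ'; lra|].
  destruct (Rle_lt_dec (D J) t) as [HJ|HJ]; [exact (IH HJ) | exists J; lra].
Qed.

Lemma reduce_one_scale n s u : 0 <= u -> exists u', 0 <= u' < D (S n) /\
  Rabs (G (s + u) - G (s + u')) <= A * (u * Rpower (D (S n)) (nu - 1)).
Proof.
  intros Hu; set (d := D (S n)); assert (Hd : 0 < d) by apply HDpos.
  destruct (exists_nat_floor_mul u d Hu Hd) as [b [Hb1 Hb2]].
  exists (u - INR b * d); split; [lra|].
  pose proof (increment_mul_nat G d (A * Rpower d nu) (fun w => HGs w n) b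
                (s + (u - INR b * d))) as H.
  replace (s + (u - INR b * d) + INR b * d) with (s + u) in H by ring.
  eapply Rle_trans; [exact H|].
  assert (E : Rpower d (nu - 1) = Rpower d nu / d).
  { unfold Rminus; rewrite Rpower_plus, Rpower_Ropp, Rpower_1 by lra; reflexivity. }
  rewrite E; pose proof (Rpower_pos d nu); pose proof increment_coeff_nonneg.
  assert (INR b <= u / d).
  { apply (Rmult_le_reg_r d); auto; unfold Rdiv; rewrite Rmult_assoc, Rinv_l; lra. }
  replace (A * (u * (Rpower d nu / d))) with ((u / d) * (A * Rpower d nu)) by (field; lra).
  apply Rmult_le_compat_r; nra.
Qed.

Lemma reduce_one_scale_cost n s u x : 0 <= u <= x -> 0 < x ->
  c * Rpower x (1 + delta) <= D (S n) ->
  exists u', 0 <= u' < D (S n) /\ Rabs (G (s + u) - G (s + u')) <= Ac * Rpower x alpha.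
Proof.
  intros Hu Hx Hdio; destruct (reduce_one_scale n s u (proj1 Hu)) as [u' [Hu' Hcost]].
  exists u'; split; auto; eapply Rle_trans; [exact Hcost|].
  unfold Ac; rewrite Rmult_assoc; apply Rmult_le_compat_l; [apply increment_coeff_nonneg|].
  apply Rle_trans with (x * Rpower (D (S n)) (nu - 1)).
  - apply Rmult_le_compat_r; [left; apply Rpower_pos | lra].
  - apply scale_loss_le; auto.
Qed.

Lemma holder_ratio_bounds : 0 < r < 1.
Proof.
  split; [apply Rpower_pos|].
  unfold r; rewrite <- (Rpower_base_1 alpha); apply Rlt_Rpower_l; [exact Halpha | lra].
Qed.

Lemma holder_cost_consts : 2 * Ac + B * r = B /\ 0 <= Ac /\ Ac <= B.
Proof.
  pose proof holder_ratio_bounds; pose proof increment_coeff_nonneg.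
  assert (0 <= Ac) by (unfold Ac; pose proof (Rpower_pos c (nu - 1)); nra).
  unfold B; split; [field; lra|]; split; auto.
  apply Rle_trans with (2 * Ac); [lra|]; unfold Rdiv.
  rewrite <- (Rmult_1_r (2 * Ac)) at 1; apply Rmult_le_compat_l; [lra|].
  rewrite <- Rinv_1; apply Rinv_le_contravar; lra.
Qed.

Lemma reduce_one_scale_cost_D n s u : 0 <= u < D n ->
  exists u', 0 <= u' < D (S n) /\ Rabs (G (s + u) - G (s + u')) <= Ac * Rpower (D n) alpha.
Proof. intros Hu; apply reduce_one_scale_cost; auto; lra. Qed.

(* Both parities of the depth are proved together, so that the induction can descend two
   scales at a time. *)
Lemma reduce_many_scales J n s u : 0 <= u < D n -> exists u', 0 <= u' < D (n + J)%nat /\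
  Rabs (G (s + u) - G (s + u')) <= B * Rpower (D n) alpha.
Proof.
  pose proof holder_cost_consts as [HB1 [HAc HAcB]]; pose proof holder_ratio_bounds.
  assert (HBpos : 0 <= B) by lra.
  cut (forall J n s u, 0 <= u < D n -> (exists u', 0 <= u' < D (n + J)%nat /\
      Rabs (G (s + u) - G (s + u')) <= B * Rpower (D n) alpha) /\
      (exists u', 0 <= u' < D (n + S J)%nat /\
      Rabs (G (s + u) - G (s + u')) <= B * Rpower (D n) alpha));
    [intros HH Hu; apply (HH J n s u Hu)|].
  clear J n s u; intros J; induction J as [|J IH]; intros n s u Hu;
    pose proof (Rpower_pos (D n) alpha).
  - split.
    + exists u; rewrite Nat.add_0_r, Rminus_diag, Rabs_R0; split; [auto | nra].
    + destruct (reduce_one_scale_cost_D n s u Hu) as [u' [Hu' Hc']].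
      exists u'; rewrite Nat.add_1_r; split; [auto | nra].
  - split; [apply (IH n s u Hu)|].
    destruct (reduce_one_scale_cost_D n s u Hu) as [u1 [Hu1 Hc1]].
    destruct (reduce_one_scale_cost_D (S n) s u1 Hu1) as [u2 [Hu2 Hc2]].
    destruct (IH (S (S n)) s u2 Hu2) as [[u3 [Hu3 Hc3]] _].
    exists u3; replace (n + S (S J))%nat with (S (S n) + J)%nat by lia; split; auto.
    assert (Ha1 : Rpower (D (S n)) alpha <= Rpower (D n) alpha).
    { apply Rle_Rpower_l; [unfold alpha; lra | split; auto]. }
    assert (Ha2 : Rpower (D (S (S n))) alpha <= r * Rpower (D n) alpha).
    { unfold r; rewrite Rpower_mult_distr by (auto; lra).
      apply Rle_Rpower_l; [unfold alpha; lra|]; split; auto; pose proof (HDhalf n); lra. }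
    replace (G (s + u) - G (s + u3)) with
      ((G (s + u) - G (s + u1)) + (G (s + u1) - G (s + u2)) + (G (s + u2) - G (s + u3)))
      by ring.
    eapply Rle_trans; [apply Rabs_triang|].
    eapply Rle_trans; [apply Rplus_le_compat_r, Rabs_triang|].
    assert (Ac * Rpower (D (S n)) alpha <= Ac * Rpower (D n) alpha)
      by (apply Rmult_le_compat_l; auto).
    assert (B * Rpower (D (S (S n))) alpha <= B * (r * Rpower (D n) alpha))
      by (apply Rmult_le_compat_l; auto).
    rewrite <- HB1; nra.
Qed.

Lemma holder_increment_pos s t : 0 < t ->
  Rabs (G (s + t) - G s) <= (2 * M + Ac + B) * Rpower t alpha.
Proof.
  intros Ht; pose proof holder_cost_consts as [HB1 [HAc HAcB]]; pose proof increment_bound_nonneg.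
  pose proof (Rpower_pos t alpha) as Hta.
  destruct (Rle_lt_dec 1 t) as [Ht1|Ht1].
  - assert (1 <= Rpower t alpha).
    { rewrite <- (Rpower_base_1 alpha); apply Rle_Rpower_l; unfold alpha; lra. }
    eapply Rle_trans; [unfold Rminus; apply Rabs_triang|]; rewrite Rabs_Ropp.
    pose proof (HGb (s + t)); pose proof (HGb s); nra.
  - destruct (scale_bracket t ltac:(lra)) as [N [HN1 HN2]].
    destruct (reduce_one_scale_cost N s t t) as [u1 [Hu1 Hc1]]; [lra | lra | |].
    { eapply Rle_trans; [|apply HDdio]; apply Rmult_le_compat_l; [lra|].
      apply Rle_Rpower_l; lra. }
    apply Rle_plus_epsilon; intros eps Heps.
    destruct (HGc s eps Heps) as [eta [Heta Hcont]].
    destruct (scale_small eta Heta) as [J HJ].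
    destruct (reduce_many_scales J (S N) s u1 Hu1) as [u' [Hu' Hc2]].
    assert (Hu'e : Rabs u' < eta).
    { rewrite Rabs_right by lra; pose proof (scale_antitone J (S N + J)%nat ltac:(lia)); lra. }
    specialize (Hcont u' Hu'e).
    assert (Hc2' : B * Rpower (D (S N)) alpha <= B * Rpower t alpha).
    { apply Rmult_le_compat_l; [lra|]; apply Rle_Rpower_l; [unfold alpha; lra | split; auto]. }
    replace (G (s + t) - G s) with
      ((G (s + t) - G (s + u1)) + (G (s + u1) - G (s + u')) + (G (s + u') - G s)) by ring.
    eapply Rle_trans; [apply Rabs_triang|].
    eapply Rle_trans; [apply Rplus_le_compat_r, Rabs_triang|].
    assert (0 <= 2 * M * Rpower t alpha) by nra; nra.
Qed.

Lemma holder_of_scale_increments : exists K, forall s t,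
  Rabs (G (s + t) - G s) <= K * Rpower (Rabs t) alpha.
Proof.
  pose proof holder_cost_consts as [HB1 [HAc HAcB]]; pose proof increment_bound_nonneg.
  exists (2 * M + Ac + B); intros s t.
  destruct (Rtotal_order t 0) as [Hl|[He|Hg]].
  - rewrite (Rabs_left t) by lra; pose proof (holder_increment_pos (s + t) (- t)) as Hneg.
    replace (s + t + - t) with s in Hneg by ring.
    rewrite Rabs_minus_sym; apply Hneg; lra.
  - subst; rewrite Rplus_0_r, Rminus_diag, Rabs_R0.
    pose proof (Rpower_pos 0 alpha); nra.
  - rewrite (Rabs_right t) by lra; apply holder_increment_pos; lra.
Qed.

End HolderFromScales.

Lemma holder_comp_lipschitz (G phi : R -> R) (alpha K L : R) : 0 < alpha -> 0 < L ->
  (forall s t, Rabs (G (s + t) - G s) <= K * Rpower (Rabs t) alpha) ->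
  (forall x y, Rabs (phi x - phi y) <= L * Rabs (x - y)) ->
  exists K', forall x y,
    Rabs (G (phi x) - G (phi y)) <= K' * Rpower (Rabs (x - y)) alpha.
Proof.
  intros Ha HL HG Hphi.
  assert (HK : 0 <= K).
  { pose proof (HG 0 0); pose proof (Rabs_pos (G (0 + 0) - G 0)).
    pose proof (Rpower_pos (Rabs 0) alpha); nra. }
  exists (K * Rpower L alpha); intros x y.
  specialize (HG (phi y) (phi x - phi y)).
  replace (phi y + (phi x - phi y)) with (phi x) in HG by ring.
  destruct (Req_dec (phi x) (phi y)) as [E|E].
  { rewrite E, Rminus_diag, Rabs_R0; pose proof (Rpower_pos L alpha);
      pose proof (Rpower_pos (Rabs (x - y)) alpha); apply Rmult_le_pos; nra. }
  assert (Hxy : x <> y) by (intros ->; apply E; reflexivity).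
  eapply Rle_trans; [exact HG|].
  rewrite Rmult_assoc; apply Rmult_le_compat_l; [exact HK|].
  rewrite Rpower_mult_distr by (auto; apply Rabs_pos_lt; lra).
  apply Rle_Rpower_l; [lra | split; [apply Rabs_pos_lt; lra | apply Hphi]].
Qed.

Lemma is_lim_seq_div_INR (a : nat -> R) (c B : R) :
  (forall n, Rabs (a n - INR n * c) <= B) -> is_lim_seq (fun n => a n / INR n) c.
Proof.
  intros Ha.
  assert (Hinv : is_lim_seq (fun n => B * / INR n) (B * 0)).
  { apply (is_lim_seq_scal_l _ B 0), (is_lim_seq_inv INR p_infty is_lim_seq_INR); discriminate. }
  rewrite Rmult_0_r in Hinv.
  apply (is_lim_seq_le_le_loc (fun n => c - B * / INR n) _ (fun n => c + B * / INR n)).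
  - exists 1%nat; intros n Hn.
    assert (Hn' : 0 < INR n) by (apply lt_0_INR; lia).
    specialize (Ha n); apply Rabs_le_between in Ha.
    assert (E : a n / INR n = c + (a n - INR n * c) * / INR n) by (field; lra).
    pose proof (Rinv_0_lt_compat _ Hn').
    rewrite E; split; nra.
  - replace (Finite c) with (Rbar_minus c 0) by (simpl; f_equal; ring).
    apply is_lim_seq_minus'; [apply is_lim_seq_const | exact Hinv].
  - replace (Finite c) with (Rbar_plus c 0) by (simpl; f_equal; ring).
    apply is_lim_seq_plus'; [apply is_lim_seq_const | exact Hinv].
Qed.

Lemma ex_derive_iterate (F : R -> R) : (forall x, ex_derive F x) ->
  forall n x, ex_derive (iterate n F) x.
Proof.
  intros HF n; induction n as [|n IH]; intros x.
  - apply ex_derive_id.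
  - apply (ex_derive_comp F (iterate n F)); [apply HF | apply IH].
Qed.

Lemma exists_frac_decomp x : exists y z, 0 <= y <= 1 /\ x = y + IZR z.
Proof.
  destruct (base_Int_part x); exists (x - IZR (Int_part x)), (Int_part x); split; [lra | ring].
Qed.

Definition cdf (h : R -> R) (x : R) : R := RInt h 0 x.

Section InvariantDensity.
Variables F h : R -> R.
Hypothesis Hh : invariant_density F h.

Lemma density_add_Z (z : Z) x : h (x + IZR z) = h x.
Proof.
  destruct Hh as [Hper _]; revert x; induction z using Z.peano_ind; intros x.
  - rewrite Rplus_0_r; reflexivity.
  - rewrite succ_IZR, <- Rplus_assoc, Hper; apply IHz.
  - rewrite <- (IHz x), <- Hper, <- Z.sub_1_r, minus_IZR; f_equal; ring.
Qed.

Lemma density_bounds : exists m M, 0 < m /\ forall x, m <= h x <= M.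
Proof.
  destruct Hh as [_ [Hcont [Hpos _]]].
  assert (Hc : forall x, 0 <= x <= 1 -> continuity_pt h x)
    by (intros x _; apply continuity_pt_filterlim, Hcont).
  destruct (continuity_ab_maj h 0 1 ltac:(lra) Hc) as [xM [HM _]].
  destruct (continuity_ab_min h 0 1 ltac:(lra) Hc) as [xm [Hm _]].
  exists (h xm), (h xM); split; [apply Hpos|].
  intros x; destruct (exists_frac_decomp x) as [y [z [Hy ->]]]; rewrite density_add_Z; auto.
Qed.

Lemma ex_RInt_density a b : ex_RInt h a b.
Proof. apply (@ex_RInt_continuous R_CompleteNormedModule); intros; apply Hh. Qed.

Lemma cdf_sub a b : cdf h b - cdf h a = RInt h a b.
Proof.
  unfold cdf; rewrite <- (RInt_Chasles h 0 a b) by apply ex_RInt_density.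
  change (plus (RInt h 0 a) (RInt h a b)) with (RInt h 0 a + RInt h a b); ring.
Qed.

Lemma cdf_0 : cdf h 0 = 0.
Proof. unfold cdf; rewrite RInt_point; reflexivity. Qed.

Lemma cdf_add1 x : cdf h (x + 1) = cdf h x + 1.
Proof.
  destruct Hh as [Hper [_ [_ [H1 _]]]].
  assert (E : cdf h (x + 1) - cdf h 1 = cdf h x - cdf h 0).
  { rewrite !cdf_sub.
    pose proof (RInt_comp_lin (V := R_CompleteNormedModule) h 1 1 0 x
                  (ex_RInt_density _ _)) as E.
    replace (1 * 0 + 1) with 1 in E by ring; replace (1 * x + 1) with (x + 1) in E by ring.
    rewrite <- E; apply RInt_ext; intros y _.
    change (scal 1 (h (1 * y + 1))) with (1 * h (1 * y + 1)).
    rewrite !Rmult_1_l; apply Hper. }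
  change (cdf h 1 = 1) in H1; rewrite H1, cdf_0 in E; lra.
Qed.

Lemma cdf_add_Z (z : Z) x : cdf h (x + IZR z) = cdf h x + IZR z.
Proof.
  revert x; induction z using Z.peano_ind; intros x.
  - rewrite !Rplus_0_r; reflexivity.
  - rewrite succ_IZR, <- Rplus_assoc, cdf_add1, IHz; ring.
  - rewrite <- Z.sub_1_r, minus_IZR.
    pose proof (cdf_add1 (x + (IZR z - 1))) as E.
    replace (x + (IZR z - 1) + 1) with (x + IZR z) in E by ring; rewrite IHz in E; lra.
Qed.

Lemma cdf_le a b : a <= b -> cdf h a <= cdf h b.
Proof.
  intros Hab; assert (0 <= RInt h a b).
  { apply RInt_ge_0; [exact Hab | apply ex_RInt_density | intros; left; apply Hh]. }
  rewrite <- cdf_sub in H; lra.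
Qed.

Lemma cdf_near x : Rabs (cdf h x - x) <= 1.
Proof.
  destruct Hh as [_ [_ [_ [H1 _]]]].
  destruct (exists_frac_decomp x) as [y [z [Hy ->]]]; rewrite cdf_add_Z.
  pose proof (cdf_le 0 y ltac:(lra)); pose proof (cdf_le y 1 ltac:(lra)).
  change (cdf h 1 = 1) in H1; rewrite H1, cdf_0 in *; apply Rabs_le; lra.
Qed.

Lemma cdf_is_derive x : is_derive (cdf h) x (h x).
Proof.
  apply (is_derive_RInt h (cdf h) 0 x); [|apply Hh].
  apply filter_forall; intros y; apply (RInt_correct (V := R_CompleteNormedModule)).
  apply ex_RInt_density.
Qed.

Lemma cdf_surj s : {x | cdf h x = s}.
Proof.
  assert (Hcont : forall x, continuous (cdf h) x)
    by (intros x; apply (ex_derive_continuous (cdf h)); eexists; apply cdf_is_derive).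
  pose proof (cdf_near (s - 1)) as Hlo; pose proof (cdf_near (s + 1)) as Hhi.
  apply Rabs_le_between in Hlo; apply Rabs_le_between in Hhi.
  destruct (IVT_gen_consistent (cdf h) (s - 1) (s + 1) s Hcont) as [x [_ Hx]];
    [split; [apply Rle_trans with (cdf h (s - 1)); [apply Rmin_l | lra]
            |apply Rle_trans with (cdf h (s + 1)); [lra | apply Rmax_r]] |].
  exists x; exact Hx.
Qed.

Definition cdf_inv (s : R) : R := proj1_sig (cdf_surj s).

Lemma cdf_invK s : cdf h (cdf_inv s) = s.
Proof. exact (proj2_sig (cdf_surj s)). Qed.

Definition conj_density (s : R) : R := h (cdf_inv s).

Lemma cdf_F x : cdf h (F x) = cdf h x + cdf h (F 0).
Proof.
  destruct Hh as [_ [_ [_ [_ Hinv]]]].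
  pose proof (Hinv 0 x) as E; rewrite <- !cdf_sub, cdf_0 in E; lra.
Qed.

Lemma cdf_iterate n x : cdf h (iterate n F x) = cdf h x + INR n * cdf h (F 0).
Proof.
  induction n as [|n IH]; [simpl; ring|].
  change (iterate (S n) F x) with (F (iterate n F x)); rewrite cdf_F, IH, S_INR; ring.
Qed.

Lemma cdf_F0_rotation rho : rotation_number_is F rho -> cdf h (F 0) = rho.
Proof.
  intros Hrot.
  assert (Hlim : is_lim_seq (fun n => (iterate n F 0 - 0) / INR n) (cdf h (F 0))).
  { apply (is_lim_seq_div_INR _ _ 1); intros n; rewrite Rminus_0_r.
    pose proof (cdf_near (iterate n F 0)) as Hn; rewrite cdf_iterate, cdf_0 in Hn.
    rewrite Rabs_minus_sym; replace (INR n * cdf h (F 0) - iterate n F 0)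
      with (0 + INR n * cdf h (F 0) - iterate n F 0) by ring; exact Hn. }
  pose proof (is_lim_seq_unique _ _ (Hrot 0)) as E1.
  rewrite (is_lim_seq_unique _ _ Hlim) in E1; injection E1; auto.
Qed.

Lemma density_iterate_derive n x : (forall y, ex_derive F y) ->
  h x = Derive (iterate n F) x * h (iterate n F x).
Proof.
  intros HF.
  assert (E : Derive (fun y => cdf h (iterate n F y)) x
              = Derive (iterate n F) x * h (iterate n F x)).
  { rewrite Derive_comp by (try (eexists; apply cdf_is_derive); apply ex_derive_iterate, HF).
    rewrite (is_derive_unique _ _ _ (cdf_is_derive _)); reflexivity. }
  rewrite <- E, (Derive_ext _ (fun y => cdf h y + INR n * cdf h (F 0))) by apply cdf_iterate.
  symmetry; apply is_derive_unique.
  pose proof (is_derive_plus (cdf h) (fun _ => INR n * cdf h (F 0)) x (h x) zero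
                (cdf_is_derive x) (is_derive_const _ _)) as Hd.
  change (plus (h x) zero) with (h x + 0) in Hd; rewrite Rplus_0_r in Hd; exact Hd.
Qed.

Section Bounds.
Variables m M : R.
Hypothesis Hm : 0 < m.
Hypothesis Hbounds : forall x, m <= h x <= M.

Lemma cdf_sub_bounds a b : a <= b -> m * (b - a) <= cdf h b - cdf h a <= M * (b - a).
Proof.
  intros Hab; rewrite cdf_sub; split.
  - apply Rle_trans with (RInt (fun _ => m) a b).
    + rewrite RInt_const; change (scal (b - a) m) with ((b - a) * m); lra.
    + apply RInt_le; [exact Hab | apply ex_RInt_const | apply ex_RInt_density |].
      intros; apply Hbounds.
  - apply Rle_trans with (RInt (fun _ => M) a b).
    + apply RInt_le; [exact Hab | apply ex_RInt_density | apply ex_RInt_const |].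
      intros; apply Hbounds.
    + rewrite RInt_const; change (scal (b - a) M) with ((b - a) * M); lra.
Qed.

Lemma cdf_bilipschitz x y :
  m * Rabs (x - y) <= Rabs (cdf h x - cdf h y) <= M * Rabs (x - y).
Proof.
  destruct (Rle_lt_dec y x) as [Hxy|Hxy].
  - pose proof (cdf_sub_bounds y x Hxy).
    rewrite !Rabs_right by nra; lra.
  - pose proof (cdf_sub_bounds x y (Rlt_le _ _ Hxy)).
    rewrite !Rabs_left1 by nra; lra.
Qed.

Lemma cdf_inv_cdf x : cdf_inv (cdf h x) = x.
Proof.
  pose proof (cdf_bilipschitz (cdf_inv (cdf h x)) x) as [Hlo _].
  rewrite cdf_invK, Rminus_diag, Rabs_R0 in Hlo.
  pose proof (Rabs_pos (cdf_inv (cdf h x) - x)).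
  assert (Rabs (cdf_inv (cdf h x) - x) = 0) by nra.
  apply Rminus_diag_uniq, Rabs_eq_0; assumption.
Qed.

Lemma conj_density_cdf x : conj_density (cdf h x) = h x.
Proof. unfold conj_density; rewrite cdf_inv_cdf; reflexivity. Qed.

Lemma conj_density_bound s : Rabs (conj_density s) <= M.
Proof. pose proof (Hbounds (cdf_inv s)); unfold conj_density; rewrite Rabs_right; lra. Qed.

Lemma conj_density_continuous s eps : 0 < eps -> exists eta, 0 < eta /\
  forall u, Rabs u < eta -> Rabs (conj_density (s + u) - conj_density s) < eps.
Proof.
  intros Heps.
  assert (Hcp : continuity_pt h (cdf_inv s)) by (apply continuity_pt_filterlim; apply Hh).
  destruct (Hcp eps Heps) as [eta [Heta Hcl]].
  exists (m * eta); split; [nra|]; intros u Hu; unfold conj_density.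
  destruct (Req_dec (cdf_inv (s + u)) (cdf_inv s)) as [E|E].
  { rewrite E, Rminus_diag, Rabs_R0; exact Heps. }
  apply (Hcl (cdf_inv (s + u))); split; [split; [constructor | auto]|].
  simpl; unfold R_dist.
  pose proof (cdf_bilipschitz (cdf_inv (s + u)) (cdf_inv s)) as [Hlo _].
  rewrite !cdf_invK in Hlo; replace (s + u - s) with u in Hlo by ring.
  apply (Rmult_lt_reg_l m); lra.
Qed.

Lemma conj_density_shift rho n p s : rotation_number_is F rho -> (forall y, ex_derive F y) ->
  Rabs (conj_density (s + (INR n * rho - INR p)) - conj_density s)
    <= M * Rabs (Derive (iterate n F) (cdf_inv s) - 1).
Proof.
  intros Hrot HF; set (z := cdf_inv s).
  assert (Hw : s + (INR n * rho - INR p) = cdf h (iterate n F z + IZR (- Z.of_nat p))).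
  { rewrite cdf_add_Z, cdf_iterate, (cdf_F0_rotation rho Hrot).
    unfold z; rewrite cdf_invK, opp_IZR, <- INR_IZR_INZ; ring. }
  rewrite Hw, conj_density_cdf, density_add_Z.
  unfold conj_density; fold z; rewrite (density_iterate_derive n z HF).
  replace (h (iterate n F z) - Derive (iterate n F) z * h (iterate n F z))
    with (- (h (iterate n F z) * (Derive (iterate n F) z - 1))) by ring.
  pose proof (Hbounds (iterate n F z)).
  rewrite Rabs_Ropp, Rabs_mult, (Rabs_right (h _)) by lra.
  apply Rmult_le_compat_r; [apply Rabs_pos | lra].
Qed.

End Bounds.
End InvariantDensity.

Lemma pow_minus_one_cases n : (-1) ^ n = 1 \/ (-1) ^ n = -1.
Proof.
  induction n as [|n IH]; simpl; [left; ring|].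
  destruct IH as [-> | ->]; [right | left]; ring.
Qed.

Lemma conj_density_cf_increment F h rho m M C nu (Hh : invariant_density F h)
  (Hm : 0 < m) (Hbounds : forall x, m <= h x <= M) :
  (forall x, ex_derive F x) -> rotation_number_is F rho -> 0 < rho < 1 -> irrational rho ->
  (forall n xi,
     Rabs (Derive (iterate (cf_q rho n) F) xi - 1) <= C * Rpower (cf_Delta rho n) nu) ->
  forall s n, Rabs (conj_density F h Hh (s + cf_rem_prod rho (S n)) - conj_density F h Hh s)
                <= M * C * Rpower (cf_rem_prod rho (S n)) nu.
Proof.
  intros HF Hrot Hr Hirr HC s n.
  assert (Hshift : forall w, Rabs (conj_density F h Hh (w + (-1) ^ n * cf_rem_prod rho (S n))
                                   - conj_density F h Hh w)
                             <= M * C * Rpower (cf_rem_prod rho (S n)) nu).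
  { intros w; rewrite <- (cf_signed_Delta rho Hr Hirr n).
    eapply Rle_trans; [apply (conj_density_shift F h Hh m M Hm Hbounds rho); assumption|].
    pose proof (HC n (cdf_inv F h Hh w)) as HCn; rewrite cf_Delta_prod in HCn by assumption.
    pose proof (Hbounds 0).
    rewrite Rmult_assoc; apply Rmult_le_compat_l; [lra | exact HCn]. }
  destruct (pow_minus_one_cases n) as [E|E]; rewrite E in Hshift.
  - specialize (Hshift s); rewrite Rmult_1_l in Hshift; exact Hshift.
  - apply increment_of_increment_opp; intros w; specialize (Hshift w).
    replace (w + -1 * cf_rem_prod rho (S n)) with (w - cf_rem_prod rho (S n)) in Hshift by ring.
    exact Hshift.
Qed.

Theorem lemma6 (delta : R) (F : R -> R) (rho : R) (h : R -> R) (nu : R) :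
  0 <= delta ->
  C1_lift_pos F ->
  0 < rho < 1 ->
  rotation_number_is F rho ->
  D_class delta rho ->
  invariant_density F h ->
  delta / (1 + delta) <= nu <= 1 ->
  (exists C, forall (n : nat) (xi : R),
      Rabs (Derive (iterate (cf_q rho n) F) xi - 1)
        <= C * Rpower (cf_Delta rho n) nu) ->
  Holder (nu * (1 + delta) - delta) h.
Proof.
  intros Hd HF Hr Hrot HDc Hh Hnu [C HC].
  pose proof (proj1 HDc) as Hirr.
  unfold Holder; destruct (Req_EM_T (nu * (1 + delta) - delta) 0) as [_|Ha0];
    [intros x; apply Hh|].
  assert (Halpha : 0 < nu * (1 + delta) - delta).
  { assert (delta <= nu * (1 + delta)); [|lra].
    pose proof (Rmult_le_compat_r (1 + delta) _ _ ltac:(lra) (proj1 Hnu)) as Hlo.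
    replace (delta / (1 + delta) * (1 + delta)) with delta in Hlo by (field; lra); exact Hlo. }
  destruct (density_bounds F h Hh) as [m [M [Hm Hb]]].
  destruct (cf_rem_prod_dioph rho Hr Hirr delta Hd HDc) as [c [Hc Hdio]].
  destruct (holder_of_scale_increments (conj_density F h Hh) (cf_rem_prod rho)
              M (M * C) c delta nu
              (cf_rem_prod_pos rho Hr Hirr) eq_refl (cf_rem_prod_succ_le rho Hr Hirr)
              (cf_rem_prod_succ2_le_half rho Hr Hirr) Hc Hdio Hd (proj2 Hnu) Halpha
              (conj_density_bound F h Hh m M Hm Hb)
              (conj_density_cf_increment F h rho m M C nu Hh Hm Hb
                 (proj1 (proj2 HF)) Hrot Hr Hirr HC)
              (conj_density_continuous F h Hh m M Hm Hb)) as [K HK].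
  destruct (holder_comp_lipschitz (conj_density F h Hh) (cdf h) _ K M Halpha
              ltac:(pose proof (Hb 0); lra) HK
              (fun x y => proj2 (cdf_bilipschitz F h Hh m M Hm Hb x y))) as [K' HK'].
  exists K'; intros x y; rewrite <- (conj_density_cdf F h Hh m M Hm Hb x),
    <- (conj_density_cdf F h Hh m M Hm Hb y); apply HK'.
Qed.
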